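(* Let $m\ge2$ be an integer, $0<h\le1$, $E=(\alpha+i\mu)h^{2m/(m+1)}$ with $\alpha,\mu>0$ independent of $h$, $\varphi(x)=\int_0^x(E+m^{-1}y^{2m})^{1/2}dy$ (branch of the square root with positive imaginary part), $u(x)=(\varphi')^{-1/2}e^{i\varphi/h}$, $f=-h^2\big(\tfrac34(\varphi')^{-2}(\varphi'')^2-\tfrac12(\varphi')^{-1}\varphi'''\big)$, $\gamma=h^{1/(m+1)}$, and $\tilde u(x)=\chi(x/\gamma)u(x)$, where $\chi\in C_c^\infty(\mathbb{R})$ with $\chi\equiv1$ on $|s|\le1$ and $\operatorname{supp}\chi\subset[-2,2]$. Let \[ R=f\tilde u+[(hD)^2,\chi(x/\gamma)]u. \] Then \[ \|R\|_{L^2}=\mathcal O(h^{2m/(m+1)})\|\tilde u\|_{L^2}. \]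
   Context: $hD=-ih\,\frac{d}{dx}$, and $[\cdot,\cdot]$ is the commutator, with $\chi(x/\gamma)$ acting as a multiplication operator. The implicit constant is independent of $h$. *)

From Stdlib Require Import Reals.
From Coquelicot Require Import Coquelicot.

Open Scope R_scope.

Definition Cexp (z : C) : C :=
  (exp (fst z) * cos (snd z), exp (fst z) * sin (snd z)).

(* Principal square root (Re >= 0; for Im z > 0 it is the root with Im > 0). *)
Definition Csqrt (z : C) : C :=
  (sqrt ((Cmod z + fst z) / 2),
   (if Rle_dec 0 (snd z) then 1 else -1) * sqrt ((Cmod z - fst z) / 2)).

Definition CDerive (g : R -> C) (x : R) : C :=
  (Derive (fun t => fst (g t)) x, Derive (fun t => snd (g t)) x).

Definition CRInt (g : R -> C) (a b : R) : C :=
  (RInt (fun t => fst (g t)) a b, RInt (fun t => snd (g t)) a b).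

Definition L2norm (g : R -> C) : R :=
  sqrt (RInt_gen (fun x => (Cmod (g x)) ^ 2)
          (Rbar_locally m_infty) (Rbar_locally p_infty)).

Definition hD (h : R) (g : R -> C) : R -> C :=
  fun x => Cmult (Copp (Cmult Ci (RtoC h))) (CDerive g x).

Definition Eh (m : nat) (alpha mu h : R) : C :=
  Cmult (alpha, mu) (RtoC (Rpower h (2 * INR m / (INR m + 1)))).

Definition phi (m : nat) (alpha mu h : R) (x : R) : C :=
  CRInt (fun y => Csqrt (Cplus (Eh m alpha mu h) (RtoC (y ^ (2 * m) / INR m)))) 0 x.

Definition phi1 m alpha mu h : R -> C := CDerive (phi m alpha mu h).
Definition phi2 m alpha mu h : R -> C := CDerive (phi1 m alpha mu h).
Definition phi3 m alpha mu h : R -> C := CDerive (phi2 m alpha mu h).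

Definition uu (m : nat) (alpha mu h : R) (x : R) : C :=
  Cmult (Cinv (Csqrt (phi1 m alpha mu h x)))
        (Cexp (Cmult Ci (Cmult (phi m alpha mu h x) (RtoC (/ h))))).

Definition ff (m : nat) (alpha mu h : R) (x : R) : C :=
  let p1 := phi1 m alpha mu h x in
  let p2 := phi2 m alpha mu h x in
  let p3 := phi3 m alpha mu h x in
  Cmult (RtoC (- h ^ 2))
    (Cminus (Cmult (RtoC (3/4)) (Cmult (Cinv (Cmult p1 p1)) (Cmult p2 p2)))
            (Cmult (RtoC (1/2)) (Cmult (Cinv p1) p3))).

Definition gam (m : nat) (h : R) : R := Rpower h (1 / (INR m + 1)).

Definition chig (chi : R -> R) (m : nat) (h : R) (g : R -> C) : R -> C :=
  fun x => Cmult (RtoC (chi (x / gam m h))) (g x).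

Definition ut (chi : R -> R) m alpha mu h : R -> C := chig chi m h (uu m alpha mu h).

Definition Rem (chi : R -> R) (m : nat) (alpha mu h : R) : R -> C :=
  fun x =>
    Cplus (Cmult (ff m alpha mu h x) (ut chi m alpha mu h x))
      (Cminus (hD h (hD h (chig chi m h (uu m alpha mu h))) x)
              (chig chi m h (hD h (hD h (uu m alpha mu h))) x)).

(* The construction is covariant under the dilation x = gam s, where gam^(m+1) = h.
   Indeed E_h = gam^(2m) E_1, so phi_h'(x) = gam^m phi_1'(x/gam), phi_h(x) = h phi_1(x/gam),
   u_h(x) = gam^(-m/2) u_1(x/gam) and f_h(x) = (h/gam)^2 f_1(x/gam); each hD picks up the factor
   h/gam, so R_h(x) = gam^(-m/2) (h/gam)^2 R_1(x/gam) while ut_h(x) = gam^(-m/2) ut_1(x/gam).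
   Taking L^2 norms, ||R_h|| / ||ut_h|| = (h/gam)^2 ||R_1|| / ||ut_1|| with (h/gam)^2 = h^(2m/(m+1)),
   and ||ut_1|| > 0 because chi = 1 near 0 and u_1 never vanishes. *)

From Stdlib Require Import Reals Lra Lia FunctionalExtensionality Classical_Prop.
From Coquelicot Require Import Coquelicot.
Open Scope R_scope.

Definition twice_derivable (f : R -> R) : Prop :=
  (forall x, ex_derive f x) /\ (forall x, ex_derive (Derive f) x).

Lemma twice_derivable_continuous f : twice_derivable f -> forall x, continuous f x.
Proof. intros [Hf _] x. exact (ex_derive_continuous f x (Hf x)). Qed.

Lemma twice_derivable_const c : twice_derivable (fun _ => c).
Proof.
  split; intro x; [apply ex_derive_const|].
  apply (ex_derive_ext (fun _ => 0)); [intro t; now rewrite Derive_const|apply ex_derive_const].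
Qed.

Lemma twice_derivable_id : twice_derivable (fun x => x).
Proof.
  split; intro x; [apply ex_derive_id|].
  apply (ex_derive_ext (fun _ => 1)); [intro t; now rewrite Derive_id|apply ex_derive_const].
Qed.

Lemma twice_derivable_plus f g :
  twice_derivable f -> twice_derivable g -> twice_derivable (fun x => f x + g x).
Proof.
  intros [F1 F2] [G1 G2]; split; intro x; [now apply (ex_derive_plus f g)|].
  apply (ex_derive_ext (fun t => Derive f t + Derive g t)).
  - intro t; now rewrite Derive_plus.
  - now apply (ex_derive_plus (Derive f) (Derive g)).
Qed.

Lemma twice_derivable_opp f : twice_derivable f -> twice_derivable (fun x => - f x).
Proof.
  intros [F1 F2]; split; intro x; [now apply (ex_derive_opp f)|].
  apply (ex_derive_ext (fun t => - Derive f t)).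
  - intro t; now rewrite Derive_opp.
  - now apply (ex_derive_opp (Derive f)).
Qed.

Lemma twice_derivable_minus f g :
  twice_derivable f -> twice_derivable g -> twice_derivable (fun x => f x - g x).
Proof. intros Hf Hg. now apply twice_derivable_plus, twice_derivable_opp. Qed.

Lemma twice_derivable_mult f g :
  twice_derivable f -> twice_derivable g -> twice_derivable (fun x => f x * g x).
Proof.
  intros [F1 F2] [G1 G2]; split; intro x; [now apply ex_derive_mult|].
  apply (ex_derive_ext (fun t => Derive f t * g t + f t * Derive g t)).
  - intro t; now rewrite Derive_mult.
  - apply (ex_derive_plus (fun t => Derive f t * g t)); now apply ex_derive_mult.
Qed.

Lemma twice_derivable_pow f n : twice_derivable f -> twice_derivable (fun x => f x ^ n).
Proof.
  intro Hf; induction n as [|n IH]; simpl.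
  - apply twice_derivable_const.
  - now apply twice_derivable_mult.
Qed.

Lemma twice_derivable_comp g g' f : twice_derivable f ->
  (forall x, is_derive g (f x) (g' (f x)) /\ ex_derive g' (f x)) ->
  twice_derivable (fun x => g (f x)).
Proof.
  intros [F1 F2] Hg; split; intro x.
  - apply ex_derive_comp; [eexists; apply Hg|auto].
  - apply (ex_derive_ext (fun t => Derive f t * g' (f t))).
    + intro t. apply eq_sym, is_derive_unique.
      apply (is_derive_comp g f t); [apply Hg|apply Derive_correct, F1].
    + apply ex_derive_mult; [auto|]. apply ex_derive_comp; [apply Hg|auto].
Qed.

Lemma twice_derivable_sqrt f :
  twice_derivable f -> (forall x, 0 < f x) -> twice_derivable (fun x => sqrt (f x)).
Proof.
  intros Hf Hpos. apply (twice_derivable_comp sqrt (fun y => / (2 * sqrt y))); [auto|].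
  intro x; pose proof (Hpos x); pose proof (sqrt_lt_R0 _ (Hpos x)).
  split; auto_derive; repeat split; lra.
Qed.

Lemma twice_derivable_inv f :
  twice_derivable f -> (forall x, f x <> 0) -> twice_derivable (fun x => / f x).
Proof.
  intros Hf Hnz. apply (twice_derivable_comp Rinv (fun y => - / (y * y))); [auto|].
  intro x; pose proof (Hnz x); split; auto_derive; auto; ring.
Qed.

Lemma twice_derivable_exp f : twice_derivable f -> twice_derivable (fun x => exp (f x)).
Proof.
  intro Hf. apply (twice_derivable_comp exp exp); [auto|].
  intro x; split; auto_derive; auto; ring.
Qed.

Lemma twice_derivable_cos f : twice_derivable f -> twice_derivable (fun x => cos (f x)).
Proof.
  intro Hf. apply (twice_derivable_comp cos (fun y => - sin y)); [auto|].
  intro x; split; auto_derive; auto; ring.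
Qed.

Lemma twice_derivable_sin f : twice_derivable f -> twice_derivable (fun x => sin (f x)).
Proof.
  intro Hf. apply (twice_derivable_comp sin cos); [auto|].
  intro x; split; auto_derive; auto; ring.
Qed.

Lemma RtoC_neq_0 x : x <> 0 -> RtoC x <> 0%C.
Proof. intros Hx E. apply Hx. now apply RtoC_inj. Qed.

Lemma Cmult_RtoC_l (a : R) (z : C) : Cmult (RtoC a) z = (a * fst z, a * snd z).
Proof. apply injective_projections; simpl; ring. Qed.

Lemma Cmod_scal_l (c : R) (z : C) : Cmod (c * z) = Rabs c * Cmod z.
Proof. now rewrite Cmod_mult, Cmod_R. Qed.

Lemma Cinv_neq_0 (z : C) : z <> 0%C -> Cinv z <> 0%C.
Proof. intros Hz E. apply C1_nz. rewrite <- (Cinv_l z Hz), E. apply Cmult_0_l. Qed.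

Lemma Cexp_neq_0 (z : C) : Cexp z <> 0%C.
Proof.
  intro E. pose proof (exp_pos (fst z)). pose proof (sin2_cos2 (snd z)). unfold Rsqr in *.
  assert (Hc : exp (fst z) * cos (snd z) = 0) by exact (f_equal fst E).
  assert (Hs : exp (fst z) * sin (snd z) = 0) by exact (f_equal snd E).
  apply Rmult_integral in Hc, Hs. destruct Hc, Hs; nra.
Qed.

Lemma Rabs_fst_lt_Cmod z : snd z <> 0 -> Rabs (fst z) < Cmod z.
Proof.
  intro Him. unfold Cmod. rewrite <- sqrt_Rsqr_abs. apply sqrt_lt_1_alt. split.
  - apply Rle_0_sqr.
  - unfold Rsqr. pose proof (pow2_gt_0 _ Him). simpl; lra.
Qed.

Lemma Csqrt_upper_half z : 0 < snd z ->
  Csqrt z = (sqrt ((Cmod z + fst z) / 2), sqrt ((Cmod z - fst z) / 2)).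
Proof.
  intro Him. unfold Csqrt. destruct (Rle_dec 0 (snd z)); [|lra]. f_equal; ring.
Qed.

Lemma Csqrt_fst_pos z : snd z <> 0 -> 0 < fst (Csqrt z).
Proof.
  intro Him. apply sqrt_lt_R0. pose proof (Rabs_fst_lt_Cmod z Him).
  pose proof (Rle_abs (- fst z)). rewrite Rabs_Ropp in *. lra.
Qed.

Lemma Csqrt_snd_pos z : 0 < snd z -> 0 < snd (Csqrt z).
Proof.
  intro Him. rewrite Csqrt_upper_half by auto. apply sqrt_lt_R0.
  pose proof (Rabs_fst_lt_Cmod z (Rgt_not_eq _ _ Him)). pose proof (Rle_abs (fst z)). simpl; lra.
Qed.

Lemma Csqrt_neq_0 z : snd z <> 0 -> Csqrt z <> 0%C.
Proof. intros Him E. pose proof (Csqrt_fst_pos z Him). rewrite E in H; simpl in H; lra. Qed.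

Lemma Csqrt_scal_l a z : 0 < a -> Csqrt (Cmult (RtoC a) z) = Cmult (RtoC (sqrt a)) (Csqrt z).
Proof.
  intro Ha. rewrite !Cmult_RtoC_l. destruct z as [x y]. unfold Csqrt, Cmod; cbn [fst snd].
  replace ((a * x) ^ 2 + (a * y) ^ 2) with ((a * a) * (x ^ 2 + y ^ 2)) by ring.
  rewrite sqrt_mult_alt, sqrt_square by nra.
  replace ((a * sqrt (x ^ 2 + y ^ 2) + a * x) / 2)
    with (a * ((sqrt (x ^ 2 + y ^ 2) + x) / 2)) by field.
  replace ((a * sqrt (x ^ 2 + y ^ 2) - a * x) / 2)
    with (a * ((sqrt (x ^ 2 + y ^ 2) - x) / 2)) by field.
  rewrite !sqrt_mult_alt by lra.
  destruct (Rle_dec 0 (a * y)), (Rle_dec 0 y); try (f_equal; ring); exfalso; nra.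
Qed.

Definition Cderivable (G : R -> C) : Prop :=
  (forall x, ex_derive (fun t => fst (G t)) x) /\ (forall x, ex_derive (fun t => snd (G t)) x).

Definition Ctwice_derivable (G : R -> C) : Prop :=
  twice_derivable (fun t => fst (G t)) /\ twice_derivable (fun t => snd (G t)).

Lemma Ctwice_derivable_Cderivable G : Ctwice_derivable G -> Cderivable G.
Proof. intros [[Hre _] [Him _]]; now split. Qed.

Lemma Ctwice_derivable_CDerive G : Ctwice_derivable G -> Cderivable (CDerive G).
Proof. intros [[_ Hre] [_ Him]]; now split. Qed.

Lemma Cderivable_scal_l (c : C) G : Cderivable G -> Cderivable (fun x => (c * G x)%C).
Proof.
  intros [Hre Him]; split; intro x; simpl.
  - apply (ex_derive_minus (fun t => fst c * fst (G t)) (fun t => snd c * snd (G t)));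
      now apply ex_derive_scal.
  - apply (ex_derive_plus (fun t => fst c * snd (G t)) (fun t => snd c * fst (G t)));
      now apply ex_derive_scal.
Qed.

Lemma Cderivable_hD h G : Ctwice_derivable G -> Cderivable (hD h G).
Proof. intro HG. apply Cderivable_scal_l, Ctwice_derivable_CDerive, HG. Qed.

Lemma Ctwice_derivable_const (z : C) : Ctwice_derivable (fun _ => z).
Proof. split; apply twice_derivable_const. Qed.

Lemma Ctwice_derivable_RtoC f : twice_derivable f -> Ctwice_derivable (fun x => RtoC (f x)).
Proof. split; [auto|exact (twice_derivable_const 0)]. Qed.

Lemma Ctwice_derivable_plus F G :
  Ctwice_derivable F -> Ctwice_derivable G -> Ctwice_derivable (fun x => (F x + G x)%C).
Proof. intros [F1 F2] [G1 G2]; split; now apply twice_derivable_plus. Qed.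

Lemma Ctwice_derivable_mult F G :
  Ctwice_derivable F -> Ctwice_derivable G -> Ctwice_derivable (fun x => (F x * G x)%C).
Proof.
  intros [F1 F2] [G1 G2]; split.
  - apply twice_derivable_minus; now apply twice_derivable_mult.
  - apply twice_derivable_plus; now apply twice_derivable_mult.
Qed.

Lemma Ctwice_derivable_Cinv G : Ctwice_derivable G -> (forall x, G x <> 0%C) ->
  Ctwice_derivable (fun x => Cinv (G x)).
Proof.
  intros [G1 G2] Hnz.
  assert (Hden : twice_derivable (fun x => / (fst (G x) ^ 2 + snd (G x) ^ 2))).
  { apply twice_derivable_inv.
    - apply twice_derivable_plus; now apply twice_derivable_pow.
    - intro x. rewrite <- Cmod2_alt. apply pow_nonzero, Rgt_not_eq, Cmod_gt_0, Hnz. }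
  split; apply twice_derivable_mult; auto. now apply twice_derivable_opp.
Qed.

Lemma Ctwice_derivable_Cexp G : Ctwice_derivable G -> Ctwice_derivable (fun x => Cexp (G x)).
Proof.
  intros [G1 G2]; split; apply twice_derivable_mult;
    auto using twice_derivable_exp, twice_derivable_cos, twice_derivable_sin.
Qed.

Lemma Ctwice_derivable_Csqrt G : Ctwice_derivable G -> (forall x, 0 < snd (G x)) ->
  Ctwice_derivable (fun x => Csqrt (G x)).
Proof.
  intros [G1 G2] Him.
  replace (fun x => Csqrt (G x)) with
    (fun x => (sqrt ((Cmod (G x) + fst (G x)) / 2), sqrt ((Cmod (G x) - fst (G x)) / 2)))
    by (apply functional_extensionality; intro x; now rewrite Csqrt_upper_half).
  assert (Hmod : twice_derivable (fun x => Cmod (G x))).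
  { apply twice_derivable_sqrt.
    - apply twice_derivable_plus; now apply twice_derivable_pow.
    - intro x. pose proof (pow2_gt_0 _ (Rgt_not_eq _ _ (Him x))).
      pose proof (pow2_ge_0 (fst (G x))). lra. }
  assert (Hlt : forall x, Rabs (fst (G x)) < Cmod (G x))
    by (intro x; apply Rabs_fst_lt_Cmod, Rgt_not_eq, Him).
  split; simpl; apply twice_derivable_sqrt; unfold Rdiv;
    try (apply twice_derivable_mult; [|apply twice_derivable_const]);
    auto using twice_derivable_plus, twice_derivable_minus;
    intro x; specialize (Hlt x); pose proof (Rle_abs (fst (G x)));
    pose proof (Rle_abs (- fst (G x))); rewrite Rabs_Ropp in *; lra.
Qed.

Lemma continuous_Cmod2 G : Ctwice_derivable G -> forall t, continuous (fun x => Cmod (G x) ^ 2) t.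
Proof.
  intros [Hre Him] t.
  apply (continuous_ext (fun x => fst (G x) ^ 2 + snd (G x) ^ 2)); [intro; now rewrite Cmod2_alt|].
  apply twice_derivable_continuous, twice_derivable_plus; now apply twice_derivable_pow.
Qed.

Lemma is_derive_RInt_0 (f : R -> R) x : (forall t, continuous f t) ->
  is_derive (fun y => RInt f 0 y) x (f x).
Proof.
  intro Hf. apply (is_derive_RInt f _ 0); [|auto].
  apply filter_forall. intro b.
  apply (@RInt_correct R_CompleteNormedModule), (@ex_RInt_continuous R_CompleteNormedModule); auto.
Qed.

Lemma twice_derivable_RInt f : (forall x, ex_derive f x) -> twice_derivable (fun x => RInt f 0 x).
Proof.
  intro Hf. assert (Hc : forall t, continuous f t) by (intro; apply ex_derive_continuous, Hf).
  split; intro x.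
  - eexists. now apply is_derive_RInt_0.
  - apply (ex_derive_ext f); [|apply Hf].
    intro t. apply eq_sym, is_derive_unique. now apply is_derive_RInt_0.
Qed.

Lemma Ctwice_derivable_CRInt G : Cderivable G -> Ctwice_derivable (fun x => CRInt G 0 x).
Proof. intros [Hre Him]. split; now apply twice_derivable_RInt. Qed.

Lemma CDerive_CRInt G :
  (forall t, continuous (fun s => fst (G s)) t) -> (forall t, continuous (fun s => snd (G s)) t) ->
  CDerive (fun x => CRInt G 0 x) = G.
Proof.
  intros Hre Him. apply functional_extensionality; intro x. unfold CDerive, CRInt.
  apply injective_projections; cbn [fst snd]; now apply is_derive_unique, is_derive_RInt_0.
Qed.

(** * Rescalings *)

Definition rescale (c g : R) (G : R -> C) : R -> C := fun x => Cmult (RtoC c) (G (x / g)).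

Lemma Derive_rescale (f : R -> R) c g x : g <> 0 -> ex_derive f (x / g) ->
  Derive (fun t => c * f (t / g)) x = c / g * Derive f (x / g).
Proof.
  intros Hg Hf. rewrite Derive_scal, (Derive_comp f (fun t => t / g)) by (auto; auto_derive; auto).
  replace (Derive (fun t => t / g) x) with (/ g).
  - unfold Rdiv; ring.
  - apply eq_sym, is_derive_unique. auto_derive; auto. field; auto.
Qed.

Lemma CDerive_rescale c g G : g <> 0 -> Cderivable G ->
  CDerive (rescale c g G) = rescale (c / g) g (CDerive G).
Proof.
  intros Hg [Hre Him]. apply functional_extensionality; intro x. unfold CDerive, rescale.
  rewrite (Derive_ext (fun t => fst (Cmult (RtoC c) (G (t / g)))) (fun t => c * fst (G (t / g))))
    by (intro; apply re_scal_l).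
  rewrite (Derive_ext (fun t => snd (Cmult (RtoC c) (G (t / g)))) (fun t => c * snd (G (t / g))))
    by (intro; apply im_scal_l).
  rewrite (Derive_rescale (fun t => fst (G t))), (Derive_rescale (fun t => snd (G t))) by auto.
  apply injective_projections; simpl; ring.
Qed.

Lemma hD_rescale h c g G : g <> 0 -> Cderivable G ->
  hD h (rescale c g G) = rescale (c * h / g) g (hD 1 G).
Proof.
  intros Hg HG. unfold hD at 1. rewrite CDerive_rescale by auto.
  apply functional_extensionality; intro x. unfold rescale, hD.
  rewrite !RtoC_div, !RtoC_mult by auto. field. now apply RtoC_neq_0.
Qed.

Lemma RInt_rescale (f : R -> R) c g x : 0 < g -> (forall t, continuous f t) ->
  RInt (fun y => c * f (y / g)) 0 x = c * g * RInt f 0 (x / g).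
Proof.
  intros Hg Hf.
  assert (Hex : ex_RInt f (/ g * 0 + 0) (/ g * x + 0))
    by (apply (@ex_RInt_continuous R_CompleteNormedModule); auto).
  pose proof (RInt_comp_lin f (/ g) 0 0 x Hex) as Hlin.
  replace (/ g * 0 + 0) with 0 in Hlin by ring.
  replace (/ g * x + 0) with (x / g) in Hlin by (unfold Rdiv; ring).
  rewrite <- Hlin.
  transitivity (RInt (fun y => scal (c * g) (scal (/ g) (f (/ g * y + 0)))) 0 x).
  - apply RInt_ext. intros t _. unfold scal; simpl; unfold mult; simpl.
    replace (/ g * t + 0) with (t / g) by (unfold Rdiv; ring). field. lra.
  - exact (RInt_scal _ 0 x (c * g) (ex_RInt_comp_lin f (/ g) 0 0 x Hex)).
Qed.

Lemma CRInt_rescale c g G x : 0 < g ->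
  (forall t, continuous (fun s => fst (G s)) t) -> (forall t, continuous (fun s => snd (G s)) t) ->
  CRInt (rescale c g G) 0 x = Cmult (RtoC (c * g)) (CRInt G 0 (x / g)).
Proof.
  intros Hg Hre Him. unfold CRInt, rescale. rewrite Cmult_RtoC_l. cbn [fst snd].
  rewrite (RInt_ext _ (fun y => c * fst (G (y / g)))) by (intros; apply re_scal_l).
  rewrite (RInt_ext (fun y => snd _) (fun y => c * snd (G (y / g)))) by (intros; apply im_scal_l).
  now rewrite (RInt_rescale (fun s => fst (G s))), (RInt_rescale (fun s => snd (G s))).
Qed.

Notation RInt_line F := (RInt_gen F (Rbar_locally m_infty) (Rbar_locally p_infty)).
Notation is_RInt_line F := (is_RInt_gen F (Rbar_locally m_infty) (Rbar_locally p_infty)).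

(* Junk value: when no limit exists, the set defining [R_complete_lim] is all of [R],
   so its [Lub_Rbar] is [p_infty], read as [0]. *)
Lemma RInt_gen_not_ex (F : R -> R) : (forall l, ~ is_RInt_line F l) -> RInt_line F = 0.
Proof.
  intro Hno. unfold RInt_gen, iota, lim; simpl. unfold R_complete_lim.
  rewrite (Lub_Rbar_eqset _ (fun _ => True)).
  2: { intro x; split; [auto|]. intros _ y Hy. destruct (Hno y Hy). }
  replace (Lub_Rbar (fun _ => True)) with p_infty; [reflexivity|].
  apply eq_sym, is_lub_Rbar_unique. split.
  - intros x _. simpl; auto.
  - intros [r| |] Hb; simpl; auto.
    + specialize (Hb (r + 1) I). simpl in Hb. lra.
    + exact (Hb 0 I).
Qed.

Lemma is_RInt_line_comp_scal (F : R -> R) u l : 0 < u ->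
  is_RInt_line F l -> is_RInt_line (fun y => u * F (u * y)) l.
Proof.
  intros Hu HF P HP. destruct (HF P HP) as [Qa Qb [A HA] [B HB] HQ].
  exists (fun x => Qa (u * x)) (fun x => Qb (u * x)).
  - exists (A / u). intros x Hx. apply HA.
    apply (Rmult_lt_compat_l u) in Hx; auto. now replace (u * (A / u)) with A in Hx by (field; lra).
  - exists (B / u). intros x Hx. apply HB.
    apply (Rmult_lt_compat_l u) in Hx; auto. now replace (u * (B / u)) with B in Hx by (field; lra).
  - intros a b Ha Hb. destruct (HQ _ _ Ha Hb) as [l' [Hl' Hp]]. exists l'; split; auto. simpl in *.
    assert (Hlin : is_RInt F (u * a + 0) (u * b + 0) l') by now rewrite !Rplus_0_r.
    apply is_RInt_comp_lin in Hlin.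
    apply (is_RInt_ext (fun y => scal u (F (u * y + 0)))); [|exact Hlin].
    intros t _. now rewrite Rplus_0_r.
Qed.

Lemma is_RInt_line_rescale_iff (F : R -> R) K g l : 0 < K -> 0 < g ->
  is_RInt_line (fun x => K * F (x / g)) l <-> is_RInt_line F (l / (K * g)).
Proof.
  intros HK Hg. split; intro H.
  - apply (is_RInt_line_comp_scal _ g), (is_RInt_gen_scal _ (/ (K * g))) in H; auto.
    replace (l / (K * g)) with (scal (/ (K * g)) l) by (unfold scal; simpl; unfold mult; simpl; field; lra).
    apply (is_RInt_gen_ext (fun y => scal (/ (K * g)) (g * (K * F (g * y / g))))); [|exact H].
    apply filter_forall. intros _ y _. unfold scal; simpl; unfold mult; simpl.
    replace (g * y / g) with y by (field; lra). field; lra.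
  - apply (is_RInt_line_comp_scal _ (/ g)), (is_RInt_gen_scal _ (K * g)) in H;
      [|now apply Rinv_0_lt_compat].
    replace l with (scal (K * g) (l / (K * g))) by (unfold scal; simpl; unfold mult; simpl; field; lra).
    apply (is_RInt_gen_ext (fun y => scal (K * g) (/ g * F (/ g * y)))); [|exact H].
    apply filter_forall. intros _ y _. unfold scal; simpl; unfold mult; simpl.
    replace (/ g * y) with (y / g) by (unfold Rdiv; ring). field; lra.
Qed.

Lemma RInt_line_rescale (F : R -> R) K g : 0 < K -> 0 < g ->
  RInt_line (fun x => K * F (x / g)) = K * g * RInt_line F.
Proof.
  intros HK Hg.
  destruct (classic (exists l, is_RInt_line F l)) as [[l Hl]|Hno].
  - rewrite (is_RInt_gen_unique F l Hl). apply is_RInt_gen_unique, is_RInt_line_rescale_iff; auto.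
    assert (Hcancel : forall r : R, K * g * r / (K * g) = r) by (intro; field; lra).
    now rewrite Hcancel.
  - rewrite (RInt_gen_not_ex F), RInt_gen_not_ex; [exact (eq_sym (Rmult_0_r _))| |].
    + intros l Hl. apply is_RInt_line_rescale_iff in Hl; eauto.
    + intros l Hl. apply Hno; eauto.
Qed.

Lemma L2norm_rescale c g G : c <> 0 -> 0 < g ->
  L2norm (rescale c g G) = Rabs c * sqrt g * L2norm G.
Proof.
  intros Hc Hg. unfold L2norm.
  replace (fun x => Cmod (rescale c g G x) ^ 2) with (fun x => c ^ 2 * Cmod (G (x / g)) ^ 2)
    by (apply functional_extensionality; intro x; unfold rescale;
        now rewrite Cmod_scal_l, Rpow_mult_distr, pow2_abs).
  rewrite (RInt_line_rescale (fun y => Cmod (G y) ^ 2)) by (auto using pow2_gt_0).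
  assert (Hc2g : 0 < c ^ 2 * g) by (apply Rmult_lt_0_compat; auto using pow2_gt_0).
  destruct (Rle_lt_dec 0 (RInt_line (fun y => Cmod (G y) ^ 2))) as [Hi|Hi].
  - rewrite (sqrt_mult_alt (c ^ 2 * g)), (sqrt_mult_alt (c ^ 2)) by (try apply pow2_ge_0; lra).
    now rewrite <- (sqrt_Rsqr_abs c), Rsqr_pow2.
  - rewrite (sqrt_neg_0 (RInt_line _)), sqrt_neg_0 by nra. ring.
Qed.

Lemma RInt_Chasles_continuous (F : R -> R) a b c : (forall x, continuous F x) ->
  RInt F a b + RInt F b c = RInt F a c.
Proof.
  intro HF. exact (RInt_Chasles F a b c
    (@ex_RInt_continuous R_CompleteNormedModule F a b (fun x _ => HF x))
    (@ex_RInt_continuous R_CompleteNormedModule F b c (fun x _ => HF x))).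
Qed.

Lemma RInt_zero_on (F : R -> R) a b :
  (forall x, Rmin a b < x < Rmax a b -> F x = 0) -> RInt F a b = 0.
Proof.
  intro H. rewrite (RInt_ext F (fun _ => 0)), RInt_const by auto.
  unfold scal; simpl; unfold mult; simpl. ring.
Qed.

Lemma is_RInt_line_compact_support (F : R -> R) a : 0 <= a -> (forall x, continuous F x) ->
  (forall x, a < Rabs x -> F x = 0) -> is_RInt_line F (RInt F (-a) a).
Proof.
  intros Ha HF Hsupp P HP.
  exists (fun x => x < -a) (fun x => a < x); [now exists (-a)|now exists a|].
  intros x y Hx Hy. exists (RInt F x y). split.
  - apply (@RInt_correct R_CompleteNormedModule), (@ex_RInt_continuous R_CompleteNormedModule); auto.
  - replace (RInt F x y) with (RInt F (-a) a); [now apply locally_singleton|].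
    rewrite <- (RInt_Chasles_continuous F x (-a) y), <- (RInt_Chasles_continuous F (-a) a y) by auto.
    rewrite (RInt_zero_on F x (-a)), (RInt_zero_on F a y); [now rewrite Rplus_0_l, Rplus_0_r| |];
      intros t Ht; apply Hsupp;
      [rewrite Rmin_left, Rmax_right in Ht by lra; rewrite Rabs_right|
       rewrite Rmin_left, Rmax_right in Ht by lra; rewrite Rabs_left]; lra.
Qed.

Lemma RInt_line_pos (F : R -> R) a b : 0 < b <= a -> (forall x, continuous F x) ->
  (forall x, a < Rabs x -> F x = 0) -> (forall x, 0 <= F x) ->
  (forall x, Rabs x <= b -> 0 < F x) -> 0 < RInt_line F.
Proof.
  intros Hab HF Hsupp Hnn Hpos.
  assert (Hex : forall u v, ex_RInt F u v)
    by (intros; apply (@ex_RInt_continuous R_CompleteNormedModule); auto).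
  assert (Ha : 0 <= a) by lra.
  rewrite (is_RInt_gen_unique F _ (is_RInt_line_compact_support F a Ha HF Hsupp)).
  rewrite <- (RInt_Chasles_continuous F (-a) (-b) a), <- (RInt_Chasles_continuous F (-b) b a) by auto.
  assert (0 <= RInt F (-a) (-b)) by (apply RInt_ge_0; [lra|apply Hex|intros; apply Hnn]).
  assert (0 <= RInt F b a) by (apply RInt_ge_0; [lra|apply Hex|intros; apply Hnn]).
  assert (0 < RInt F (-b) b).
  { apply RInt_gt_0; [lra| |intros; apply HF]. intros x Hx. apply Hpos, Rabs_le. lra. }
  lra.
Qed.

(** * Scaling covariance of the construction *)

Lemma Rpower_base_1 x : Rpower 1 x = 1.
Proof. unfold Rpower. now rewrite ln_1, Rmult_0_r, exp_0. Qed.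

Lemma gam_pos m h : 0 < gam m h.
Proof. apply exp_pos. Qed.

Lemma gam_1 m : gam m 1 = 1.
Proof. apply Rpower_base_1. Qed.

Lemma gam_pow_succ m h : 0 < h -> gam m h ^ S m = h.
Proof.
  intro Hh. unfold gam. rewrite <- Rpower_pow, Rpower_mult by apply exp_pos.
  rewrite S_INR. replace (1 / (INR m + 1) * (INR m + 1)) with 1.
  - now apply Rpower_1.
  - field. pose proof (pos_INR m). lra.
Qed.

Lemma gam_pow_double m h : gam m h ^ (2 * m) = Rpower h (2 * INR m / (INR m + 1)).
Proof.
  unfold gam. rewrite <- Rpower_pow, Rpower_mult by apply exp_pos.
  f_equal. rewrite mult_INR. simpl. field. pose proof (pos_INR m). lra.
Qed.

Lemma gam_ratio_sq m h : 0 < h -> (h / gam m h) ^ 2 = Rpower h (2 * INR m / (INR m + 1)).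
Proof.
  intro Hh. pose proof (gam_pos m h).
  rewrite <- gam_pow_double, <- (gam_pow_succ m h Hh) at 1.
  replace (2 * m)%nat with (m + m)%nat by lia. rewrite pow_add. simpl. field. lra.
Qed.

Section Rescaling.

Variables (m : nat) (alpha mu : R).
Hypothesis Hmu : 0 < mu.

Definition phi_integrand (h y : R) : C :=
  Csqrt (Cplus (Eh m alpha mu h) (RtoC (y ^ (2 * m) / INR m))).

Lemma phi_integrand_radicand_im_pos h y :
  0 < snd (Cplus (Eh m alpha mu h) (RtoC (y ^ (2 * m) / INR m))).
Proof.
  unfold Eh, Rpower; simpl. pose proof (exp_pos (2 * INR m / (INR m + 1) * ln h)). nra.
Qed.

Lemma phi_integrand_im_pos h y : 0 < snd (phi_integrand h y).
Proof. apply Csqrt_snd_pos, phi_integrand_radicand_im_pos. Qed.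

Lemma phi_integrand_neq_0 h y : phi_integrand h y <> 0%C.
Proof. apply Csqrt_neq_0, Rgt_not_eq, phi_integrand_radicand_im_pos. Qed.

Lemma Ctwice_derivable_phi_integrand h : Ctwice_derivable (phi_integrand h).
Proof.
  apply Ctwice_derivable_Csqrt; [|apply phi_integrand_radicand_im_pos].
  apply Ctwice_derivable_plus; [apply Ctwice_derivable_const|apply Ctwice_derivable_RtoC].
  apply twice_derivable_mult; [|apply twice_derivable_const].
  apply twice_derivable_pow, twice_derivable_id.
Qed.

Lemma phi1_eq h : phi1 m alpha mu h = phi_integrand h.
Proof.
  destruct (Ctwice_derivable_phi_integrand h) as [Hre Him].
  apply CDerive_CRInt; now apply twice_derivable_continuous.
Qed.

Lemma phi_integrand_rescale h : 0 < h ->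
  phi_integrand h = rescale (gam m h ^ m) (gam m h) (phi_integrand 1).
Proof.
  intro Hh. pose proof (gam_pos m h) as Hg.
  apply functional_extensionality; intro y. unfold rescale, phi_integrand.
  rewrite <- (sqrt_pow2 (gam m h ^ m)) by (apply pow_le; lra).
  rewrite <- Csqrt_scal_l by (apply pow2_gt_0, pow_nonzero; lra).
  f_equal. rewrite Cmult_RtoC_l. unfold Eh, Cplus, Cmult, RtoC; cbn [fst snd].
  rewrite Rpower_base_1, <- gam_pow_double.
  replace ((gam m h ^ m) ^ 2) with (gam m h ^ (2 * m)) by (rewrite <- pow_mult; f_equal; lia).
  unfold Rdiv. rewrite Rpow_mult_distr, pow_inv. set (k := / INR m).
  assert (gam m h ^ (2 * m) <> 0) by (apply pow_nonzero; lra).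
  f_equal; field; auto.
Qed.

Lemma phi_rescale h : 0 < h -> phi m alpha mu h = rescale h (gam m h) (phi m alpha mu 1).
Proof.
  intro Hh. destruct (Ctwice_derivable_phi_integrand 1) as [Hre Him].
  apply functional_extensionality; intro x. unfold phi at 1. fold (phi_integrand h).
  rewrite phi_integrand_rescale, CRInt_rescale by (auto using gam_pos, twice_derivable_continuous).
  replace (gam m h ^ m * gam m h) with h; [reflexivity|].
  now rewrite Rmult_comm, tech_pow_Rmult, gam_pow_succ.
Qed.

Lemma phi1_rescale h : 0 < h ->
  phi1 m alpha mu h = rescale (gam m h ^ m) (gam m h) (phi1 m alpha mu 1).
Proof. intro Hh. rewrite !phi1_eq. now apply phi_integrand_rescale. Qed.

Lemma phi2_rescale h : 0 < h ->
  phi2 m alpha mu h = rescale (gam m h ^ m / gam m h) (gam m h) (phi2 m alpha mu 1).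
Proof.
  intro Hh. unfold phi2. rewrite phi1_rescale by auto.
  apply CDerive_rescale; [apply Rgt_not_eq, gam_pos|].
  rewrite phi1_eq. apply Ctwice_derivable_Cderivable, Ctwice_derivable_phi_integrand.
Qed.

Lemma phi3_rescale h : 0 < h ->
  phi3 m alpha mu h = rescale (gam m h ^ m / gam m h / gam m h) (gam m h) (phi3 m alpha mu 1).
Proof.
  intro Hh. unfold phi3. rewrite phi2_rescale by auto.
  apply CDerive_rescale; [apply Rgt_not_eq, gam_pos|].
  unfold phi2. rewrite phi1_eq. apply Ctwice_derivable_CDerive, Ctwice_derivable_phi_integrand.
Qed.

Lemma uu_rescale h : 0 < h ->
  uu m alpha mu h = rescale (/ sqrt (gam m h ^ m)) (gam m h) (uu m alpha mu 1).
Proof.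
  intro Hh. pose proof (gam_pos m h) as Hg.
  assert (Hk : 0 < sqrt (gam m h ^ m)) by (apply sqrt_lt_R0, pow_lt; auto).
  apply functional_extensionality; intro x. unfold uu at 1.
  rewrite phi1_rescale, phi_rescale by auto. unfold rescale, uu.
  rewrite Csqrt_scal_l by (apply pow_lt; auto).
  assert (Hs : Csqrt (phi1 m alpha mu 1 (x / gam m h)) <> 0%C)
    by (rewrite phi1_eq; apply Csqrt_neq_0, Rgt_not_eq, phi_integrand_im_pos).
  replace (Cmult (Cmult (RtoC h) (phi m alpha mu 1 (x / gam m h))) (RtoC (/ h)))
    with (Cmult (phi m alpha mu 1 (x / gam m h)) (RtoC (/ 1))).
  - rewrite !RtoC_inv by (intro; lra). field. split; [auto|apply RtoC_neq_0, Rgt_not_eq, Hk].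
  - rewrite !RtoC_inv by (intro; lra). field. apply RtoC_neq_0. intro; lra.
Qed.

Lemma ff_rescale h : 0 < h ->
  ff m alpha mu h = rescale ((h / gam m h) ^ 2) (gam m h) (ff m alpha mu 1).
Proof.
  intro Hh. pose proof (gam_pos m h) as Hg.
  apply functional_extensionality; intro x. unfold ff at 1.
  rewrite phi1_rescale, phi2_rescale, phi3_rescale by auto. unfold rescale, ff.
  assert (Hq : phi1 m alpha mu 1 (x / gam m h) <> 0%C) by (rewrite phi1_eq; apply phi_integrand_neq_0).
  replace ((h / gam m h) ^ 2) with (h ^ 2 / gam m h ^ 2) by (field; apply Rgt_not_eq, Hg).
  rewrite !RtoC_div, !RtoC_opp, !RtoC_pow by (try apply pow_nonzero; lra).
  field. repeat split; try apply Cpow_nz; auto; apply RtoC_neq_0; intro; lra.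
Qed.

Lemma Ctwice_derivable_uu1 : Ctwice_derivable (uu m alpha mu 1).
Proof.
  unfold uu. rewrite phi1_eq. apply Ctwice_derivable_mult.
  - apply Ctwice_derivable_Cinv.
    + apply Ctwice_derivable_Csqrt; [apply Ctwice_derivable_phi_integrand|apply phi_integrand_im_pos].
    + intro s. apply Csqrt_neq_0, Rgt_not_eq, phi_integrand_im_pos.
  - apply Ctwice_derivable_Cexp, Ctwice_derivable_mult; [apply Ctwice_derivable_const|].
    apply Ctwice_derivable_mult; [|apply Ctwice_derivable_const].
    apply Ctwice_derivable_CRInt, Ctwice_derivable_Cderivable, Ctwice_derivable_phi_integrand.
Qed.

Variable chi : R -> R.
Hypothesis Hchi : twice_derivable chi.

Lemma chig_rescale h c G :
  chig chi m h (rescale c (gam m h) G) = rescale c (gam m h) (fun s => Cmult (RtoC (chi s)) (G s)).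
Proof.
  apply functional_extensionality; intro x. unfold chig, rescale. ring.
Qed.

Lemma chig_1 G : chig chi m 1 G = fun s => Cmult (RtoC (chi s)) (G s).
Proof.
  apply functional_extensionality; intro x. unfold chig. now rewrite gam_1, Rdiv_1_r.
Qed.

Lemma ut_rescale h : 0 < h ->
  ut chi m alpha mu h = rescale (/ sqrt (gam m h ^ m)) (gam m h) (ut chi m alpha mu 1).
Proof. intro Hh. unfold ut. now rewrite uu_rescale, chig_rescale, chig_1. Qed.

Lemma Ctwice_derivable_chi_uu1 : Ctwice_derivable (fun s => Cmult (RtoC (chi s)) (uu m alpha mu 1 s)).
Proof. apply Ctwice_derivable_mult; [now apply Ctwice_derivable_RtoC|apply Ctwice_derivable_uu1]. Qed.

Lemma Rem_rescale h : 0 < h -> Rem chi m alpha mu h =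
  rescale (/ sqrt (gam m h ^ m) * (h / gam m h) ^ 2) (gam m h) (Rem chi m alpha mu 1).
Proof.
  intro Hh. pose proof (gam_pos m h) as Hg. apply functional_extensionality; intro x.
  unfold Rem at 1. rewrite ff_rescale, ut_rescale, uu_rescale, chig_rescale by auto.
  rewrite !hD_rescale by (try apply Rgt_not_eq, Hg; auto using Cderivable_hD, Ctwice_derivable_Cderivable,
    Ctwice_derivable_chi_uu1, Ctwice_derivable_uu1).
  rewrite chig_rescale. unfold rescale, Rem, ut. rewrite !chig_1.
  set (c := / sqrt (gam m h ^ m)).
  replace (c * h / gam m h * h / gam m h) with (c * (h / gam m h) ^ 2) by (field; apply Rgt_not_eq, Hg).
  rewrite !RtoC_mult. ring.
Qed.

Lemma uu1_neq_0 s : uu m alpha mu 1 s <> 0%C.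
Proof.
  unfold uu. rewrite phi1_eq. apply Cmult_neq_0; [|apply Cexp_neq_0].
  apply Cinv_neq_0, Csqrt_neq_0, Rgt_not_eq, phi_integrand_im_pos.
Qed.

Lemma L2norm_ut1_pos : (forall s, Rabs s <= 1 -> chi s = 1) -> (forall s, 2 < Rabs s -> chi s = 0) ->
  0 < L2norm (ut chi m alpha mu 1).
Proof.
  intros Hchi1 Hchi0. unfold L2norm, ut. rewrite chig_1.
  apply sqrt_lt_R0, (RInt_line_pos _ 2 1); [lra| | | |].
  - apply continuous_Cmod2, Ctwice_derivable_chi_uu1.
  - intros x Hx. rewrite Cmod_scal_l, Hchi0, Rabs_R0 by auto. ring.
  - intro x. apply pow2_ge_0.
  - intros x Hx. rewrite Cmod_scal_l, Hchi1, Rabs_R1, Rmult_1_l by auto.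
    apply pow2_gt_0, Rgt_not_eq, Cmod_gt_0, uu1_neq_0.
Qed.

End Rescaling.

Theorem lemma5p2 (m : nat) (alpha mu : R) (chi : R -> R) :
  (2 <= m)%nat -> 0 < alpha -> 0 < mu ->
  (forall n x, ex_derive_n chi n x) ->
  (forall s, Rabs s <= 1 -> chi s = 1) ->
  (forall s, 2 < Rabs s -> chi s = 0) ->
  exists C0 : R, 0 <= C0 /\
    forall h : R, 0 < h -> h <= 1 ->
      L2norm (Rem chi m alpha mu h)
        <= C0 * Rpower h (2 * INR m / (INR m + 1)) * L2norm (ut chi m alpha mu h).
Proof.
  intros _ _ Hmu Hsmooth Hchi1 Hchi0.
  assert (Hchi : twice_derivable chi) by (split; intro x; [exact (Hsmooth 1%nat x)|exact (Hsmooth 2%nat x)]).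
  pose proof (L2norm_ut1_pos m alpha mu Hmu chi Hchi Hchi1 Hchi0) as Hut.
  exists (L2norm (Rem chi m alpha mu 1) / L2norm (ut chi m alpha mu 1)). split.
  { apply Rdiv_le_0_compat; [apply sqrt_pos|exact Hut]. }
  intros h Hh _. pose proof (gam_pos m h) as Hg.
  assert (Hc : 0 < / sqrt (gam m h ^ m)) by (apply Rinv_0_lt_compat, sqrt_lt_R0, pow_lt, Hg).
  assert (Hk : 0 < (h / gam m h) ^ 2) by (apply pow_lt, Rdiv_lt_0_compat; auto).
  rewrite (Rem_rescale m alpha mu Hmu chi Hchi h Hh), (ut_rescale m alpha mu Hmu chi h Hh).
  rewrite !L2norm_rescale, <- gam_ratio_sq by (auto; apply Rgt_not_eq; red; auto using Rmult_lt_0_compat).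
  rewrite Rabs_mult, (Rabs_pos_eq ((h / gam m h) ^ 2)) by lra.
  apply Req_le. field. split; now apply Rgt_not_eq.
Qed.
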